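(* Let $L$ be a distributive lattice with generated Boolean algebra $B$, $n\ge1$, $a_i,b_i\in L$ with $a_i<b_i$ for $i\in[n]$, $\widehat{\mathbf e}_I\in L^n$ ($I\subseteq[n]$) the tuple with $i$-th component $b_i$ if $i\in I$ and $a_i$ otherwise, $D=\{\widehat{\mathbf e}_I:I\subseteq[n]\}$, and $f\colon D\to L$ monotone and satisfying $$f(\widehat{\mathbf e}_{I\cup\{k\}})\wedge a_k\le f(\widehat{\mathbf e}_I)\le f(\widehat{\mathbf e}_{I\setminus\{k\}})\vee b_k\quad\text{for all } I\subseteq[n],\ k\in[n].$$ Then $p^+(\widehat{\mathbf e}_J)\le f(\widehat{\mathbf e}_J)$ for all $J\subseteq[n]$.
   Context: $B$ is the Boolean algebra generated by $L$ (with $L$ embedded), with complement $x\mapsto x'$. $f$ monotone means $I\subseteq J\Rightarrow f(\widehat{\mathbf e}_I)\le f(\widehat{\mathbf e}_J)$. Define $c_I^+=f(\widehat{\mathbf e}_I)\vee\bigvee_{i\in I}b_i'\in B$ and $p^+(\mathbf x)=\bigvee_{I\subseteq[n]}(c_I^+\wedge\bigwedge_{i\in I}x_i)$, a polynomial function over $B$. *)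

From mathcomp Require Import all_boot all_order.
Set Implicit Arguments. Unset Strict Implicit. Unset Printing Implicit Defensive.
Import Order.TTheory.
Local Open Scope order_scope.

Definition bool_generated (d d' : Order.disp_t) (L : latticeType d)
  (B : ctbDistrLatticeType d') (emb : L -> B) : Prop :=
  forall S : B -> Prop,
    S \bot -> S \top ->
    (forall x y, S x -> S y -> S (x `&` y)) ->
    (forall x y, S x -> S y -> S (x `|` y)) ->
    (forall x, S x -> S (~` x)) ->
    (forall l, S (emb l)) ->
    forall y, S y.

Definition ehat (d : Order.disp_t) (L : latticeType d) (n : nat)
  (a b : 'I_n -> L) (I : {set 'I_n}) : 'I_n -> L :=
  fun i => if i \in I then b i else a i.

(* c_I^+ = f(\hat e_I) \/ \/_{i in I} b_i'  (computed in B). [f] is given as a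
   function of the index set I, i.e. F I = f(\hat e_I). *)
Definition cplus (d d' : Order.disp_t) (L : latticeType d)
  (B : ctbDistrLatticeType d') (emb : L -> B) (n : nat)
  (b : 'I_n -> L) (F : {set 'I_n} -> L) (I : {set 'I_n}) : B :=
  emb (F I) `|` \join_(i in I) ~` emb (b i).

Definition pplus (d d' : Order.disp_t) (L : latticeType d)
  (B : ctbDistrLatticeType d') (emb : L -> B) (n : nat)
  (b : 'I_n -> L) (F : {set 'I_n} -> L) (x : 'I_n -> B) : B :=
  \join_(I : {set 'I_n}) (cplus emb b F I `&` \meet_(i in I) x i).

From mathcomp Require Import all_boot all_order.
Import Order.TTheory Order.CTheory.
Set Implicit Arguments. Unset Strict Implicit. Unset Printing Implicit Defensive.
Local Open Scope order_scope.

(* Peeling the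
   coordinates of [I \ J] off one at a time, [f(e_I) /\ /\_{i in I\J} a_i]
   descends to [f(e_J)]; this bounds the [f]-part of each term of [p^+(e_J)],
   while the complemented part [\/_{i in I} b_i'] is disjoint from
   [/\_{i in I} (e_J)_i] because every component of [e_J] lies below [b_i]. *)

Section MeetChain.
Variables (d : Order.disp_t) (M : tLatticeType d) (T : finType).
Variables (G : {set T} -> M) (c : T -> M).
Hypothesis G_step : forall (I : {set T}) (k : T), G (k |: I) `&` c k <= G I.

Lemma meet_chain (S K : {set T}) :
  G (S :|: K) `&` \meet_(k in S) c k <= G K.
Proof.
have [m] := ubnP #|S|; elim: m S => // m IHm S.
have [-> _ | [k kS] ltSm] := set_0Vmem S; first by rewrite set0U big_set0 meetx1.
have kS' : k \notin S :\ k by rewrite !inE eqxx.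
rewrite -(setD1K kS) big_setU1 //= -setUA meetA.
apply: le_trans (leI2 (G_step _ _) (lexx _)) _.
apply: IHm; rewrite (cardsD1 k S) kS in ltSm; exact: ltSm.
Qed.

End MeetChain.

Lemma joins_compl_meets_eq0 (d : Order.disp_t) (B : ctbDistrLatticeType d)
    (T : finType) (P : {pred T}) (x y : T -> B) :
  (forall i, P i -> x i <= y i) ->
  (\join_(i | P i) ~` y i) `&` \meet_(i | P i) x i = \bot.
Proof.
move=> le_xy; apply/eqP; rewrite -lex0.
have join_le : \join_(i | P i) ~` y i <= ~` \meet_(i | P i) x i.
  apply/joinsP => i Pi; rewrite leC.
  exact: le_trans (meets_inf _ Pi) (le_xy i Pi).
by apply: le_trans (leI2 join_le (lexx _)) _; rewrite meetCx.
Qed.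

Theorem lemma3p3 (d d' : Order.disp_t) (L : distrLatticeType d)
  (B : ctbDistrLatticeType d') (emb : {lmorphism L -> B})
  (emb_inj : injective emb) (emb_gen : bool_generated emb)
  (n : nat) (n_ge1 : (1 <= n)%N) (a b : 'I_n -> L)
  (ab : forall i, a i < b i)
  (f : ('I_n -> L) -> L)
  (f_mono : forall I J : {set 'I_n}, I \subset J ->
     f (ehat a b I) <= f (ehat a b J))
  (f_cond : forall (I : {set 'I_n}) (k : 'I_n),
     f (ehat a b (k |: I)) `&` a k <= f (ehat a b I) /\
     f (ehat a b I) <= f (ehat a b (I :\ k)) `|` b k) :
  forall J : {set 'I_n},
    pplus emb b (fun I => f (ehat a b I)) (fun i => emb (ehat a b J i))
      <= emb (f (ehat a b J)).
Proof.
move=> J; apply/joinsP => I _; rewrite /cplus meetUl leUx.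
rewrite joins_compl_meets_eq0 ?le0x ?andbT; last first.
  by move=> i _; apply: omorph_le; rewrite /ehat; case: ifP => // _; apply: ltW.
have F_le : emb (f (ehat a b I)) <= emb (f (ehat a b ((I :\: J) :|: J))).
  apply/omorph_le/f_mono/subsetP => i iI.
  by rewrite !inE iI; case: (i \in J).
have meet_le : \meet_(i in I) emb (ehat a b J i) <= \meet_(i in I :\: J) emb (a i).
  apply/meetsP => i /setDP [iI iJ].
  by apply: le_trans (meets_inf _ iI) _; rewrite /ehat (negbTE iJ).
have step (I' : {set 'I_n}) k :
    emb (f (ehat a b (k |: I'))) `&` emb (a k) <= emb (f (ehat a b I')).
  by rewrite -omorphI; apply/omorph_le/(f_cond I' k).1.
exact: le_trans (leI2 F_le meet_le) (meet_chain step _ _).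
Qed.
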